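(* Every metrizable locally compact $J$-space has a countable base.
   Context: A topological space $X$ is a $J$-space if whenever $\{A,B\}$ is a cover of $X$ by closed sets with $A\cap B$ compact, then $A$ or $B$ is compact. *)

From Stdlib Require Import Reals List Classical.
Open Scope R_scope.

Definition set (X : Type) := X -> Prop.

Definition subset {X} (A B : set X) : Prop := forall x, A x -> B x.
Definition bigunion {X} (F : set (set X)) : set X := fun x => exists U, F U /\ U x.

Record topology (X : Type) := Topology {
  open : set X -> Prop;
  open_full : open (fun _ => True);
  open_inter : forall U V, open U -> open V -> open (fun x => U x /\ V x);
  open_union : forall F : set (set X), (forall U, F U -> open U) -> open (bigunion F)
}.
Arguments open {X} t U.

Definition closed {X} (t : topology X) (A : set X) : Prop :=
  open t (fun x => ~ A x).

Definition compact {X} (t : topology X) (K : set X) : Prop :=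
  forall F : set (set X), (forall U, F U -> open t U) -> subset K (bigunion F) ->
  exists l : list (set X), (forall U, In U l -> F U) /\
     subset K (fun x => exists U, In U l /\ U x).

Definition J_space {X} (t : topology X) : Prop :=
  forall A B : set X, closed t A -> closed t B -> (forall x, A x \/ B x) ->
  compact t (fun x => A x /\ B x) -> compact t A \/ compact t B.

Definition locally_compact {X} (t : topology X) : Prop :=
  forall x : X, exists U K, open t U /\ U x /\ subset U K /\ compact t K.

Definition is_metric {X} (d : X -> X -> R) : Prop :=
  (forall x y, 0 <= d x y) /\ (forall x y, d x y = 0 <-> x = y) /\
  (forall x y, d x y = d y x) /\ (forall x y z, d x z <= d x y + d y z).

Definition metrizable {X} (t : topology X) : Prop :=
  exists d : X -> X -> R, is_metric d /\
    forall U : set X, open t U <->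
      (forall x, U x -> exists eps, 0 < eps /\ subset (fun y => d x y < eps) U).

Definition is_base {X} (t : topology X) (B : set (set X)) : Prop :=
  (forall V, B V -> open t V) /\
  (forall U x, open t U -> U x -> exists V, B V /\ V x /\ subset V U).

Definition countable {T} (A : set T) : Prop :=
  exists f : T -> nat, forall a b, A a -> A b -> f a = f b -> a = b.

Definition second_countable {X} (t : topology X) : Prop :=
  exists B : set (set X), is_base t B /\ countable B.

(* Fix a metric d inducing the topology.  Local compactness gives every point x
   a "compactness radius" rho x in (0,1], the supremum of the radii r <= 1 for
   which the ball B(x,r) lies in a compact set; rho is 1-Lipschitz.  Call p and
   q linked when d p q is smaller than half of both rho p and rho q.  Linking is
   symmetric and holds on small balls, so every set closed under linking is
   clopen; and the points linked to a compact set lie in a compact set, so the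
   chain component of a point (everything reachable by finite chains of links)
   is sigma-compact.

   The J-space property enters through a purely topological fact: if the union
   A of an increasing sequence of open sigma-compact sets is clopen, then either
   A is already contained in one of them or the whole space is sigma-compact
   (apply the J property to the closed cover {A, complement of A}).  Adding one
   chain component at a time to an increasing sequence, this shows that a
   locally compact metric J-space is sigma-compact.  Finally a sigma-compact
   metric space is second countable: the balls of radius 1/(m+1) centred at
   finite 1/(m+1)-nets of the compact pieces form a countable base. *)

From Stdlib Require Import Reals List Classical Lra.
From Stdlib Require Import ClassicalEpsilon Cantor.
From Stdlib Require Import FunctionalExtensionality PropExtensionality.
Open Scope R_scope.

Lemma countable_of_enumeration {T : Type} (A : set T) (g : nat -> option T) :
  (forall a, A a -> exists n, g n = Some a) -> countable A.
Proof.
  intros Hg.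
  exists (fun a => epsilon (inhabits 0%nat) (fun n => g n = Some a)).
  intros a b Ha Hb Heq.
  pose proof (epsilon_spec (inhabits 0%nat) _ (Hg a Ha)) as Ea.
  pose proof (epsilon_spec (inhabits 0%nat) _ (Hg b Hb)) as Eb.
  rewrite Heq, Eb in Ea. injection Ea; auto.
Qed.

Section CompactSets.
Context {X : Type} (t : topology X).

Lemma compact_ext (A B : set X) :
  (forall x, A x <-> B x) -> compact t A -> compact t B.
Proof.
  intros E HA F HF HB. destruct (HA F HF) as [l [H1 H2]].
  - intros x Ax; apply HB, E, Ax.
  - exists l; split; auto. intros x Bx; apply H2, E, Bx.
Qed.

Lemma compact_empty : compact t (fun _ => False).
Proof. intros F _ _; exists nil; split; intros ? []. Qed.

Lemma compact_single (x : X) : compact t (fun y => y = x).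
Proof.
  intros F HF Hcov. destruct (Hcov x eq_refl) as [U [HU Ux]].
  exists (U :: nil); split.
  - intros V [<-|[]]; auto.
  - intros y ->; exists U; split; [left|]; auto.
Qed.

Lemma compact_union2 (A B : set X) :
  compact t A -> compact t B -> compact t (fun x => A x \/ B x).
Proof.
  intros HA HB F HF Hcov.
  destruct (HA F HF) as [l1 [H11 H12]]; [intros x Ax; apply Hcov; auto|].
  destruct (HB F HF) as [l2 [H21 H22]]; [intros x Bx; apply Hcov; auto|].
  exists (l1 ++ l2); split.
  - intros U HU; apply in_app_iff in HU as [?|?]; auto.
  - intros x [Ax|Bx];
      [destruct (H12 x Ax) as [U [? ?]]|destruct (H22 x Bx) as [U [? ?]]];
      exists U; split; auto; apply in_app_iff; auto.
Qed.

Lemma compact_finite_union {I : Type} (L : I -> set X) (l : list I) :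
  (forall i, compact t (L i)) -> compact t (fun x => exists i, In i l /\ L i x).
Proof.
  intros HL; induction l as [|i l IH].
  - eapply compact_ext; [|apply compact_empty].
    intros x; split; [intros []|intros [? [[] _]]].
  - eapply compact_ext; [|exact (compact_union2 _ _ (HL i) IH)].
    intros x; split.
    + intros [Lx|[j [Hj Lx]]]; [exists i|exists j]; simpl; auto.
    + intros [j [[<-|Hj] Lx]]; [left|right; exists j]; auto.
Qed.

Lemma compact_finite_subcover {I : Type} (K : set X) (U : I -> set X) :
  compact t K -> (forall i, open t (U i)) -> subset K (fun x => exists i, U i x) ->
  exists l : list I, subset K (fun x => exists i, In i l /\ U i x).
Proof.
  intros HK HU Hcov.
  destruct (HK (fun V => exists i, V = U i)) as [l [Hl Hsub]].
  - intros V [i ->]; apply HU.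
  - intros x Kx; destruct (Hcov x Kx) as [i Ui]; exists (U i); eauto.
  - assert (Hidx : exists li : list I,
               forall V, In V l -> exists i, In i li /\ V = U i).
    { clear Hsub; induction l as [|V l IH].
      - exists nil; intros _ [].
      - destruct IH as [li Hli]; [intros; apply Hl; now right|].
        destruct (Hl V (or_introl eq_refl)) as [i ->].
        exists (i :: li); intros V' [<-|HV'].
        + exists i; split; [left|]; auto.
        + destruct (Hli V' HV') as [j [? ?]]; exists j; split; [right|]; auto. }
    destruct Hidx as [li Hli]; exists li; intros x Kx.
    destruct (Hsub x Kx) as [V [HV Vx]]; destruct (Hli V HV) as [i [Hi ->]]; eauto.
Qed.

Lemma compact_increasing (K : set X) (V : nat -> set X) :
  compact t K -> (forall n, open t (V n)) -> (forall n, subset (V n) (V (S n))) ->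
  subset K (fun x => exists n, V n x) -> exists N, subset K (V N).
Proof.
  intros HK HV Hinc Hcov.
  assert (Hmono : forall n m, (n <= m)%nat -> subset (V n) (V m)).
  { intros n m Hnm x Hx; induction Hnm; [exact Hx|apply Hinc, IHHnm]. }
  destruct (compact_finite_subcover K V HK HV Hcov) as [l Hl].
  exists (list_max l); intros x Kx.
  destruct (Hl x Kx) as [n [Hn Vx]].
  apply (Hmono n); [|exact Vx].
  apply (proj1 (Forall_forall _ l) (proj1 (list_max_le l _) (le_n _)) n Hn).
Qed.

Definition sigma_compact (S : set X) : Prop :=
  exists K : nat -> set X,
    (forall n, compact t (K n)) /\ subset S (fun x => exists n, K n x).

Lemma sigma_compact_mono (A B : set X) :
  subset A B -> sigma_compact B -> sigma_compact A.
Proof.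
  intros HAB [K [HK Hcov]]; exists K; split; auto.
  intros x Ax; apply Hcov, HAB, Ax.
Qed.

Lemma sigma_compact_countable_union (S : nat -> set X) :
  (forall n, sigma_compact (S n)) -> sigma_compact (fun x => exists n, S n x).
Proof.
  intros HS; destruct (choice _ HS) as [K HK].
  exists (fun k => K (fst (of_nat k)) (snd (of_nat k))); split.
  - intros k; apply HK.
  - intros x [n Sx]; destruct (proj2 (HK n) x Sx) as [m Kx].
    exists (to_nat (n, m)); rewrite cancel_of_to; exact Kx.
Qed.

Lemma sigma_compact_union2 (A B : set X) :
  sigma_compact A -> sigma_compact B -> sigma_compact (fun x => A x \/ B x).
Proof.
  intros HA HB.
  apply (sigma_compact_mono _
           (fun x => exists n, (match n with O => A | S _ => B end) x)).
  - intros x [Ax|Bx]; [exists O|exists 1%nat]; auto.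
  - apply sigma_compact_countable_union; intros [|n]; auto.
Qed.

(* In a J-space a clopen set or its complement is compact: the two form a
   closed cover with empty (hence compact) intersection. *)
Lemma J_space_clopen (A : set X) :
  J_space t -> open t A -> closed t A -> compact t A \/ compact t (fun x => ~ A x).
Proof.
  intros HJ HA HAc; apply HJ; auto.
  - unfold closed.
    replace (fun x => ~ ~ A x) with A; [exact HA|].
    apply functional_extensionality; intros x.
    apply propositional_extensionality; split; [auto|apply NNPP].
  - intros x; apply classic.
  - eapply compact_ext; [|apply compact_empty].
    intros x; split; [intros []|intros [Ax nAx]; auto].
Qed.

Lemma J_space_exhaustion (V : nat -> set X) :
  J_space t -> (forall n, open t (V n)) -> (forall n, subset (V n) (V (S n))) ->
  (forall n, sigma_compact (V n)) ->
  open t (fun x => exists n, V n x) -> closed t (fun x => exists n, V n x) ->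
  sigma_compact (fun _ => True) \/ exists N, subset (fun x => exists n, V n x) (V N).
Proof.
  intros HJ HV Hinc HVs HA HAc.
  destruct (J_space_clopen _ HJ HA HAc) as [Hcomp|Hcocomp].
  - right; apply compact_increasing; auto; intros x Hx; exact Hx.
  - left. apply (sigma_compact_mono _ (fun x => (exists n, V n x) \/ ~ (exists n, V n x))).
    + intros x _; apply classic.
    + apply sigma_compact_union2.
      * apply sigma_compact_countable_union; exact HVs.
      * exists (fun _ => fun x => ~ (exists n, V n x)); split; auto.
        intros x Hx; exists O; exact Hx.
Qed.

End CompactSets.

Section MetricSpace.
Context {X : Type} (t : topology X) (d : X -> X -> R).
Hypothesis d_metric : is_metric d.
Hypothesis t_metric : forall U : set X, open t U <->
  (forall x, U x -> exists eps, 0 < eps /\ subset (fun y => d x y < eps) U).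

Lemma d_nonneg x y : 0 <= d x y. Proof. apply d_metric. Qed.
Lemma d_self x : d x x = 0. Proof. apply d_metric; auto. Qed.
Lemma d_sym x y : d x y = d y x. Proof. apply d_metric. Qed.
Lemma d_triangle x y z : d x z <= d x y + d y z. Proof. apply d_metric. Qed.

Definition ball (x : X) (r : R) : set X := fun y => d x y < r.

Lemma ball_center x r : 0 < r -> ball x r x.
Proof. intros Hr; unfold ball; rewrite d_self; exact Hr. Qed.

Lemma ball_open x r : open t (ball x r).
Proof.
  apply t_metric; intros y Hy; exists (r - d x y); split; unfold ball in *; [lra|].
  intros z Hz; pose proof (d_triangle x y z); lra.
Qed.

Definition radius (m : nat) : R := / INR (S m).

Lemma radius_pos m : 0 < radius m.
Proof. apply Rinv_0_lt_compat, lt_0_INR, Nat.lt_0_succ. Qed.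

Lemma radius_small e : 0 < e -> exists m, radius m < e.
Proof.
  intros He; destruct (archimed_cor1 e He) as [[|m] [Hm Hpos]].
  - inversion Hpos.
  - exists m; exact Hm.
Qed.

Lemma compact_finite_net (K : set X) (e : R) : compact t K -> 0 < e ->
  exists l : list X, forall x, K x -> exists y, In y l /\ d y x < e.
Proof.
  intros HK He.
  destruct (compact_finite_subcover t K (fun y => ball y e) HK (fun y => ball_open y e))
    as [l Hl].
  - intros x _; exists x; apply ball_center; exact He.
  - exists l; intros x Kx; destruct (Hl x Kx) as [y [Hy Hyx]]; eauto.
Qed.

Lemma sigma_compact_second_countable :
  sigma_compact t (fun _ => True) -> second_countable t.
Proof.
  intros [K [HK Hcov]].
  destruct (choice (fun (jm : nat * nat) (l : list X) =>
      forall x, K (fst jm) x -> exists y, In y l /\ d y x < radius (snd jm)))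
    as [net Hnet].
  { intros [j m]; apply compact_finite_net; [apply HK|apply radius_pos]. }
  set (code := fun k => let (c, i) := of_nat k in
         option_map (fun y => ball y (radius (snd (of_nat c)))) (nth_error (net (of_nat c)) i)).
  exists (fun V => exists k, code k = Some V); split; [split|].
  - intros V [k Hk]; unfold code in Hk; destruct (of_nat k) as [c i].
    destruct (nth_error (net (of_nat c)) i); [injection Hk as <-; apply ball_open|discriminate].
  - intros U x HU Ux.
    destruct (proj1 (t_metric U) HU x Ux) as [e [He HeU]].
    destruct (radius_small (e / 2)) as [m Hm]; [lra|].
    destruct (Hcov x I) as [j Kx].
    destruct (Hnet (j, m) x Kx) as [y [Hy Hyx]]; simpl in Hyx.
    destruct (In_nth_error _ _ Hy) as [i Hi].
    exists (ball y (radius m)); split; [|split].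
    + exists (to_nat (to_nat (j, m), i)); unfold code.
      rewrite !cancel_of_to, Hi; reflexivity.
    + exact Hyx.
    + intros z Hz; apply HeU; unfold ball in Hz; simpl.
      pose proof (d_triangle x y z); rewrite (d_sym x y) in *; lra.
  - apply (countable_of_enumeration _ code); intros V HV; exact HV.
Qed.

Hypothesis t_locally_compact : locally_compact t.

Definition admissible_radius (x : X) (r : R) : Prop :=
  0 < r <= 1 /\ exists L, compact t L /\ subset (ball x r) L.

Lemma admissible_radius_exists x : exists r, admissible_radius x r.
Proof.
  destruct (t_locally_compact x) as [U [K [HU [Ux [HUK HK]]]]].
  destruct (proj1 (t_metric U) HU x Ux) as [e [He Hsub]].
  exists (Rmin e 1); split; [split; [apply Rmin_glb_lt; lra|apply Rmin_r]|].
  exists K; split; auto. intros z Hz; apply HUK, Hsub.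
  unfold ball in Hz; pose proof (Rmin_l e 1); lra.
Qed.

Lemma admissible_radius_bound x : bound (admissible_radius x).
Proof. exists 1; intros r [[_ H] _]; exact H. Qed.

Definition rho (x : X) : R :=
  proj1_sig (completeness _ (admissible_radius_bound x) (admissible_radius_exists x)).

Lemma rho_lub x : is_lub (admissible_radius x) (rho x).
Proof. unfold rho; destruct completeness; auto. Qed.

Lemma rho_pos x : 0 < rho x.
Proof.
  destruct (admissible_radius_exists x) as [r Hr].
  pose proof (proj1 (rho_lub x) r Hr); destruct Hr as [[? ?] _]; lra.
Qed.

Lemma rho_le1 x : rho x <= 1.
Proof. apply (proj2 (rho_lub x)); intros r [[_ H] _]; exact H. Qed.

Lemma rho_ball x r : 0 < r -> r < rho x ->
  exists L, compact t L /\ subset (ball x r) L.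
Proof.
  intros Hr Hrx.
  destruct (classic (exists r', admissible_radius x r' /\ r < r'))
    as [[r' [[_ [L [HL Hs]]] Hlt]]|Hnone].
  - exists L; split; auto. intros z Hz; apply Hs; unfold ball in *; lra.
  - assert (rho x <= r); [|lra].
    apply (proj2 (rho_lub x)); intros r' Hr'.
    destruct (Rle_or_lt r' r); auto. exfalso; apply Hnone; eauto.
Qed.

Lemma rho_lipschitz x y : rho x - d x y <= rho y.
Proof.
  destruct (Rle_or_lt (rho x - d x y) (rho y)) as [|Hlt]; auto; exfalso.
  set (r := (rho y + (rho x - d x y)) / 2).
  pose proof (rho_pos y); pose proof (rho_le1 x); pose proof (d_nonneg x y).
  destruct (rho_ball x (r + d x y)) as [L [HL Hs]]; unfold r; try lra.
  assert (Hadm : admissible_radius y r).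
  { split; [unfold r; lra|]. exists L; split; auto.
    intros z Hz; apply Hs; unfold ball in *; pose proof (d_triangle x y z); lra. }
  pose proof (proj1 (rho_lub y) r Hadm); unfold r in *; lra.
Qed.

Definition linked (p q : X) : Prop := d p q < rho p / 2 /\ d p q < rho q / 2.

Lemma linked_sym p q : linked p q -> linked q p.
Proof. intros [H1 H2]; rewrite d_sym in H1, H2; split; auto. Qed.

Lemma linked_near y z : d y z < rho y / 4 -> linked y z.
Proof.
  intros H; pose proof (rho_lipschitz y z); pose proof (rho_pos y);
    pose proof (d_nonneg y z); split; lra.
Qed.

Definition linked_closed (A : set X) : Prop :=
  forall p q, A p -> linked p q -> A q.

Lemma linked_closed_open A : linked_closed A -> open t A.
Proof.
  intros HA; apply t_metric; intros y Ay.
  exists (rho y / 4); split; [pose proof (rho_pos y); lra|].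
  intros z Hz; apply (HA y z Ay), linked_near, Hz.
Qed.

Lemma linked_closed_closed A : linked_closed A -> closed t A.
Proof.
  intros HA; apply t_metric; intros z Hz.
  exists (rho z / 4); split; [pose proof (rho_pos z); lra|].
  intros y Hzy Ay; apply Hz, (HA y z Ay), linked_sym, linked_near, Hzy.
Qed.

(* The points linked to a compact set lie in a compact set: cover K by balls
   B(y, rho y / 4); anything linked to such a ball lies in B(y, 7/8 rho y). *)
Lemma linked_hull (K : set X) : compact t K ->
  exists K', compact t K' /\ forall p q, K p -> linked p q -> K' q.
Proof.
  intros HK.
  destruct (choice (fun y L => compact t L /\ subset (ball y (7 * rho y / 8)) L))
    as [hull Hhull].
  { intros y; apply rho_ball; pose proof (rho_pos y); lra. }
  destruct (compact_finite_subcover t K (fun y => ball y (rho y / 4)) HK)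
    as [l Hl].
  - intros y; apply ball_open.
  - intros x _; exists x; apply ball_center; pose proof (rho_pos x); lra.
  - exists (fun z => exists y, In y l /\ hull y z); split.
    + apply compact_finite_union; intros y; apply Hhull.
    + intros p q Kp [Hpq _]; destruct (Hl p Kp) as [y [Hy Hyp]].
      exists y; split; auto; apply Hhull; unfold ball in *.
      pose proof (rho_lipschitz p y); pose proof (d_triangle y p q).
      rewrite (d_sym p y) in *; lra.
Qed.

Fixpoint chain (x : X) (n : nat) : set X :=
  match n with
  | O => fun y => y = x
  | S n => fun q => exists p, chain x n p /\ linked p q
  end.

Definition component (x : X) : set X := fun q => exists n, chain x n q.

Lemma component_self x : component x x.
Proof. exists O; reflexivity. Qed.

Lemma component_linked_closed x : linked_closed (component x).
Proof. intros p q [n Hp] Hpq; exists (S n); simpl; eauto. Qed.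

Lemma component_sigma_compact x : sigma_compact t (component x).
Proof.
  assert (Hchain : forall n, exists K, compact t K /\ subset (chain x n) K).
  { induction n as [|n [K [HK Hs]]].
    - exists (fun y => y = x); split; [apply compact_single|intros y Hy; exact Hy].
    - destruct (linked_hull K HK) as [K' [HK' Hhull]].
      exists K'; split; auto.
      intros q [p [Hp Hpq]]; eapply Hhull; eauto. }
  destruct (choice _ Hchain) as [K HK].
  exists K; split; [apply HK|].
  intros q [n Hq]; exists n; apply HK, Hq.
Qed.

Fixpoint exhaustion (x0 : X) (next : set X -> X) (n : nat) : set X :=
  match n with
  | O => component x0
  | S n => fun y => exhaustion x0 next n y \/ component (next (exhaustion x0 next n)) y
  end.

Lemma exhaustion_linked_closed x0 next n : linked_closed (exhaustion x0 next n).
Proof.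
  induction n as [|n IH]; simpl; [apply component_linked_closed|].
  intros p q [Hp|Hp] Hpq; [left; eapply IH|right; eapply component_linked_closed]; eauto.
Qed.

Lemma exhaustion_sigma_compact x0 next n : sigma_compact t (exhaustion x0 next n).
Proof.
  induction n as [|n IH]; simpl; [apply component_sigma_compact|].
  apply sigma_compact_union2; auto; apply component_sigma_compact.
Qed.

Hypothesis t_J : J_space t.

(* Otherwise no exhaustion
   stage covers the space, so choosing a new point outside each stage gives an
   increasing sequence of clopen sigma-compact sets that never stabilises. *)
Lemma locally_compact_J_sigma_compact : sigma_compact t (fun _ => True).
Proof.
  apply NNPP; intros Hnot.
  destruct (classic (inhabited X)) as [inh|Hempty].
  2:{ apply Hnot; exists (fun _ _ => False); split; [intros; apply compact_empty|].
      intros x _; exfalso; apply Hempty; constructor; exact x. }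
  destruct inh as [x0].
  set (outside := fun A : set X => epsilon (inhabits x0) (fun x => ~ A x)).
  assert (Houtside : forall A, sigma_compact t A -> ~ A (outside A)).
  { intros A HA; apply (epsilon_spec (inhabits x0) (fun x => ~ A x)).
    apply NNPP; intros Hall; apply Hnot, (sigma_compact_mono t _ A); auto.
    intros x _; apply NNPP; intros Hx; apply Hall; eauto. }
  assert (Hunion : linked_closed (fun x => exists n, exhaustion x0 outside n x)).
  { intros p q [n Hp] Hpq; exists n; eapply exhaustion_linked_closed; eauto. }
  destruct (J_space_exhaustion t (exhaustion x0 outside) t_J) as [Hall|[N HN]].
  - intros n; apply linked_closed_open, exhaustion_linked_closed.
  - intros n x Hx; left; exact Hx.
  - intros n; apply exhaustion_sigma_compact.
  - apply linked_closed_open, Hunion.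
  - apply linked_closed_closed, Hunion.
  - contradiction.
  - apply (Houtside _ (exhaustion_sigma_compact x0 outside N)), HN.
    exists (S N); right; apply component_self.
Qed.

End MetricSpace.

Theorem proposition1p3 (X : Type) (t : topology X) :
  metrizable t -> locally_compact t -> J_space t -> second_countable t.
Proof.
  intros [d [d_metric t_metric]] t_locally_compact t_J.
  apply (sigma_compact_second_countable t d d_metric t_metric).
  exact (locally_compact_J_sigma_compact t d d_metric t_metric t_locally_compact t_J).
Qed.
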